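(* Let $b\in\mathbb{Z}$ and let $q\ge 0$ be an integer. For $k\in\mathbb{N}$ and $z\in\mathbb{Z}$ let $F_{k,z}$ and $G_{k,z}$ be distribution functions of probability distributions supported on the nonnegative integers. Let $(S_k)_{k\ge0}$ and $(T_k)_{k\ge0}$ be integer-valued processes with $S_0=T_0=b$, $$S_{k+1}=S_k+X_k-q,\qquad T_{k+1}=T_k+Y_k-q,$$ where, conditionally on $S_0,\dots,S_k$, the variable $X_k$ has distribution function $F_{k,S_k}$, and conditionally on $T_0,\dots,T_k$, the variable $Y_k$ has distribution function $G_{k,T_k}$. Assume: (1) for all $k\in\mathbb{N}$, $z\in\mathbb{Z}$, $l\in\mathbb{R}$: $G_{k,z}(l)\le G_{k,z-1}(l+1)$; (2) there is an integer $M\ge b$ such that for all $k\in\mathbb N$ and all integers $z\le M-kq$, $F_{k,z}\succ G_{k,z}$. Then for every $n\ge1$ and every integers $l_1,\dots,l_n$ with $l_k\le M-kq$ for all $k$, $$\Pr[S_1>l_1,S_2>l_2,\dots,S_n>l_n]\ \ge\ \Pr[T_1>l_1,T_2>l_2,\dots,T_n>l_n].$$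
   Context: For distribution functions $F,G$ on $\mathbb{R}$, $F\succ G$ means $F(t)\le G(t)$ for all $t\in\mathbb{R}$ (i.e. $F$ stochastically dominates $G$). *)

From Stdlib Require Import Reals ZArith ClassicalEpsilon.
Open Scope R_scope.

(* Value of a convergent real series (the limit of its partial sums);
   chosen by classical choice, only meaningful when the series converges. *)
Definition sumR (f : nat -> R) : R :=
  epsilon (inhabits 0) (fun s => infinite_sum f s).

Definition is_pmf (p : nat -> R) : Prop :=
  (forall x, 0 <= p x) /\ infinite_sum p 1.

Definition cdf (p : nat -> R) (t : R) : R :=
  sumR (fun x => if Rle_dec (INR x) t then p x else 0).

(* Chain S_{k+1} = S_k + X_k - q, where given the past X_k has pmf P k S_k.
   surv P q l m k z = Pr[S_{k+1} > l (k+1), ..., S_{k+m} > l (k+m) | S_k = z]. *)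
Fixpoint surv (P : nat -> Z -> nat -> R) (q : Z) (l : nat -> Z)
    (m k : nat) (z : Z) : R :=
  match m with
  | O => 1
  | S m' =>
      sumR (fun x =>
        let z' := (z + Z.of_nat x - q)%Z in
        P k z x * (if Z.ltb (l (S k)) z' then surv P q l m' (S k) z' else 0))
  end.

Definition prob_all_above (P : nat -> Z -> nat -> R) (q b : Z) (l : nat -> Z)
    (n : nat) : R :=
  surv P q l n 0 b.

(* Both survival probabilities satisfy the same backward recursion
   surv (m+1) k z = E[ 1{l_{k+1} < z + X - q} surv m (k+1) (z + X - q) ].
   Hypothesis (1) says that raising the state by one shifts the step law of the
   T-chain stochastically up by one, so by induction its survival probability is
   nondecreasing in the state.  Below the barrier M - kq, hypothesis (2) makes the
   step law of S dominate that of T, and a nondecreasing function in [0,1] has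
   larger mean under the dominating law; above the barrier the S-chain can never
   fall below the later levels, so it survives with probability 1. *)

From Stdlib Require Import Reals ZArith Lra Lia Psatz ClassicalEpsilon FunctionalExtensionality.
Open Scope R_scope.

Lemma sumR_spec f : (exists s, infinite_sum f s) -> infinite_sum f (sumR f).
Proof. exact (epsilon_spec (inhabits 0) (infinite_sum f)). Qed.

Lemma sumR_eq f s : infinite_sum f s -> sumR f = s.
Proof. intro Hs. apply (uniqueness_sum f); [apply sumR_spec; eauto | exact Hs]. Qed.

Lemma infinite_sum_le f g A B : infinite_sum f A -> infinite_sum g B ->
  (forall x, f x <= g x) -> A <= B.
Proof.
  intros HA HB Hle.
  refine (@Rle_cv_lim (fun N => sum_f_R0 f N) (fun N => sum_f_R0 g N) A B _ HA HB).
  intro N. apply sum_Rle. auto.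
Qed.

Lemma infinite_sum_0 : infinite_sum (fun _ => 0) 0.
Proof.
  intros e he. exists 0%nat. intros n _. rewrite sum_cte. unfold Rdist.
  rewrite Rmult_0_l, Rminus_0_r, Rabs_R0. lra.
Qed.

Lemma cdf_INR p m : cdf p (INR m) = sum_f_R0 p m.
Proof.
  unfold cdf. apply sumR_eq.
  set (g := fun x => if Rle_dec (INR x) (INR m) then p x else 0).
  assert (Htail : forall k, sum_f_R0 g (m + k) = sum_f_R0 p m).
  { induction k as [|k IHk].
    - rewrite Nat.add_0_r. apply sum_eq. intros i Hi. unfold g.
      destruct (Rle_dec (INR i) (INR m)) as [|Hn]; auto.
      exfalso; apply Hn, le_INR; lia.
    - rewrite Nat.add_succ_r. simpl. rewrite IHk. unfold g.
      destruct (Rle_dec (INR (S (m + k))) (INR m)) as [Hr|]; [|ring].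
      apply INR_le in Hr. lia. }
  intros e he. exists m. intros n Hn. replace n with (m + (n - m))%nat by lia.
  rewrite Htail. unfold Rdist. rewrite Rminus_diag, Rabs_R0. lra.
Qed.

(* The law of X + 1 when [f] is the law of X. *)
Definition shift (f : nat -> R) (x : nat) : R :=
  match x with O => 0 | S y => f y end.

Lemma sum_shift f N : sum_f_R0 (shift f) (S N) = sum_f_R0 f N.
Proof. induction N as [|N IHN]; simpl in *; [ring|]. rewrite <- IHN. simpl. ring. Qed.

Lemma infinite_sum_shift f s : infinite_sum f s -> infinite_sum (shift f) s.
Proof.
  intros Hs e he. destruct (Hs e he) as [N HN]. exists (S N). intros n Hn.
  destruct n as [|n]; [lia|]. rewrite sum_shift. apply HN. lia.
Qed.

Lemma is_pmf_shift p : is_pmf p -> is_pmf (shift p).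
Proof.
  intros [Hp0 Hp1]. split; [intros [|x]; simpl; auto; lra|].
  exact (infinite_sum_shift p 1 Hp1).
Qed.

Definition unit_bounded (h : nat -> R) : Prop := forall x, 0 <= h x <= 1.

Definition expect (p h : nat -> R) : R := sumR (fun x => p x * h x).

Section Expectation.

Variable p : nat -> R.
Hypothesis hp : is_pmf p.

Lemma infinite_sum_expect h : unit_bounded h ->
  infinite_sum (fun x => p x * h x) (expect p h).
Proof.
  intro hh. destruct hp as [hp0 hp1]. apply sumR_spec.
  destruct (Rseries_CV_comp (fun x => p x * h x) p) as [s Hs].
  - intro x. specialize (hp0 x). specialize (hh x). split; nra.
  - exists 1. exact hp1.
  - exists s. exact Hs.
Qed.

Lemma expect_le h g : unit_bounded h -> unit_bounded g -> (forall x, h x <= g x) ->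
  expect p h <= expect p g.
Proof.
  intros hh hg Hhg. destruct hp as [hp0 _].
  apply (infinite_sum_le _ _ _ _ (infinite_sum_expect h hh) (infinite_sum_expect g hg)).
  intro x. apply Rmult_le_compat_l; auto.
Qed.

Lemma expect_bounds h : unit_bounded h -> 0 <= expect p h <= 1.
Proof.
  intro hh. destruct hp as [hp0 hp1].
  split; [apply (infinite_sum_le _ _ _ _ infinite_sum_0 (infinite_sum_expect h hh))
         |apply (infinite_sum_le _ _ _ _ (infinite_sum_expect h hh) hp1)];
    intro x; specialize (hp0 x); specialize (hh x); nra.
Qed.

Lemma expect_1 : expect p (fun _ => 1) = 1.
Proof.
  unfold expect. transitivity (sumR p); [|exact (sumR_eq p 1 (proj2 hp))].
  f_equal. apply functional_extensionality. intro x. ring.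
Qed.

Lemma expect_shift h : unit_bounded h -> expect (shift p) h = expect p (fun x => h (S x)).
Proof.
  intro hh. apply sumR_eq.
  replace (fun x => shift p x * h x) with (shift (fun x => p x * h (S x))).
  - apply infinite_sum_shift, infinite_sum_expect. intro x. apply hh.
  - apply functional_extensionality. intros [|x]; simpl; ring.
Qed.

End Expectation.

(* Abel summation: sum_{x<=N} (p x - r x) h x >= (P_N - R_N) h N >= P_N - R_N,
   where P, R are the partial sums, and the right-hand side tends to 0. *)
Lemma expect_le_of_dominance p r h : is_pmf p -> is_pmf r ->
  (forall N, sum_f_R0 p N <= sum_f_R0 r N) ->
  (forall x, h x <= h (S x)) -> unit_bounded h ->
  expect r h <= expect p h.
Proof.
  intros hp hr Hcdf Hmono hh.
  assert (Habel : forall N, sum_f_R0 (fun x => p x * h x) N - sum_f_R0 (fun x => r x * h x) N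
     >= (sum_f_R0 p N - sum_f_R0 r N) * h N).
  { induction N as [|N IHN]; simpl; [lra|].
    specialize (Hcdf N). specialize (Hmono N).
    assert ((sum_f_R0 p N - sum_f_R0 r N) * (h (S N) - h N) <= 0) by nra.
    nra. }
  assert (1 - 1 <= expect p h - expect r h); [|lra].
  apply (@Rle_cv_lim (fun N => sum_f_R0 p N - sum_f_R0 r N)
    (fun N => sum_f_R0 (fun x => p x * h x) N - sum_f_R0 (fun x => r x * h x) N)).
  - intro N. specialize (Habel N). specialize (Hcdf N). specialize (hh N).
    assert ((sum_f_R0 p N - sum_f_R0 r N) * (1 - h N) <= 0) by nra. nra.
  - apply CV_minus; [apply hp | apply hr].
  - apply CV_minus; apply infinite_sum_expect; auto.
Qed.

Definition surv_next P q l m k (w : Z) : R :=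
  if (l (S k) <? w)%Z then surv P q l m (S k) w else 0.

Lemma surv_S P q l m k z : surv P q l (S m) k z =
  expect (P k z) (fun x => surv_next P q l m k (z + Z.of_nat x - q)%Z).
Proof. reflexivity. Qed.

Lemma Zsucc_mul k q : (Z.of_nat (S k) * q = Z.of_nat k * q + q)%Z.
Proof. rewrite Nat2Z.inj_succ, Z.mul_succ_l. reflexivity. Qed.

Section Chain.

Variables (P : nat -> Z -> nat -> R) (q : Z) (l : nat -> Z).
Hypothesis hP : forall k z, is_pmf (P k z).

Lemma surv_bounds m k z : 0 <= surv P q l m k z <= 1.
Proof.
  revert k z; induction m as [|m IHm]; intros k z; [simpl; lra|].
  rewrite surv_S. apply expect_bounds; auto.
  intro x. unfold surv_next. destruct Z.ltb; auto. lra.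
Qed.

Lemma surv_next_bounds m k w : 0 <= surv_next P q l m k w <= 1.
Proof. unfold surv_next. destruct Z.ltb; [apply surv_bounds | lra]. Qed.

Lemma surv_next_shift_bounds m k z :
  unit_bounded (fun x => surv_next P q l m k (z + Z.of_nat x - q)%Z).
Proof. intro x. apply surv_next_bounds. Qed.

Lemma surv_next_succ m k :
  (forall w, surv P q l m (S k) w <= surv P q l m (S k) (w + 1)) ->
  forall w, surv_next P q l m k w <= surv_next P q l m k (w + 1).
Proof.
  intros Hsurv w. unfold surv_next.
  destruct (l (S k) <? w)%Z eqn:E.
  - apply Z.ltb_lt in E. replace (l (S k) <? w + 1)%Z with true; [apply Hsurv|].
    symmetry. apply Z.ltb_lt. lia.
  - apply (surv_next_bounds m k (w + 1)).
Qed.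

Lemma surv_next_mono m k z :
  (forall w, surv P q l m (S k) w <= surv P q l m (S k) (w + 1)) ->
  forall x, surv_next P q l m k (z + Z.of_nat x - q)%Z
            <= surv_next P q l m k (z + Z.of_nat (S x) - q)%Z.
Proof.
  intros Hsurv x.
  replace (z + Z.of_nat (S x) - q)%Z with (z + Z.of_nat x - q + 1)%Z by lia.
  apply surv_next_succ, Hsurv.
Qed.

(* Above the barrier the chain stays above every later level, since each step
   lowers it by at most q. *)
Lemma surv_above_barrier (M : Z) m k z :
  (forall j, (k < j <= k + m)%nat -> (l j <= M - Z.of_nat j * q)%Z) ->
  (M - Z.of_nat k * q < z)%Z -> surv P q l m k z = 1.
Proof.
  revert k z; induction m as [|m IHm]; intros k z Hl Hz; [reflexivity|].
  rewrite surv_S, <- (expect_1 (P k z) (hP k z)). f_equal.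
  apply functional_extensionality. intro x. unfold surv_next.
  assert (Hj := Hl (S k) ltac:(lia)). rewrite Zsucc_mul in Hj.
  replace (l (S k) <? z + Z.of_nat x - q)%Z with true by (symmetry; apply Z.ltb_lt; lia).
  apply IHm.
  - intros j Hj'. apply Hl. lia.
  - rewrite Zsucc_mul. lia.
Qed.

Hypothesis hP_state : forall k z t, cdf (P k z) t <= cdf (P k (z - 1)%Z) (t + 1).

Lemma surv_succ m k z : surv P q l m k z <= surv P q l m k (z + 1).
Proof.
  revert k z; induction m as [|m IHm]; intros k z; [simpl; lra|].
  rewrite !surv_S.
  set (h := fun x => surv_next P q l m k (z + Z.of_nat x - q)%Z).
  replace (expect _ (fun x => surv_next P q l m k (z + 1 + Z.of_nat x - q)%Z))
    with (expect (shift (P k (z + 1)%Z)) h).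
  2:{ rewrite expect_shift; [|apply hP|apply surv_next_shift_bounds].
      f_equal. apply functional_extensionality. intro x. unfold h. f_equal. lia. }
  apply expect_le_of_dominance; auto using is_pmf_shift, surv_next_shift_bounds.
  - intros [|N].
    + simpl. apply hP.
    + rewrite sum_shift, <- !cdf_INR, S_INR.
      specialize (hP_state k (z + 1)%Z (INR N)).
      replace (z + 1 - 1)%Z with z in hP_state by ring. exact hP_state.
  - apply surv_next_mono. auto.
  - apply surv_next_shift_bounds.
Qed.

End Chain.

Lemma surv_le_of_dominance (q M : Z) (F G : nat -> Z -> nat -> R) (l : nat -> Z)
  (hF : forall k z, is_pmf (F k z)) (hG : forall k z, is_pmf (G k z))
  (hG_state : forall k z t, cdf (G k z) t <= cdf (G k (z - 1)%Z) (t + 1))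
  (hFG : forall k z, (z <= M - Z.of_nat k * q)%Z -> forall t, cdf (F k z) t <= cdf (G k z) t)
  m k z :
  (forall j, (k < j <= k + m)%nat -> (l j <= M - Z.of_nat j * q)%Z) ->
  surv G q l m k z <= surv F q l m k z.
Proof.
  revert k z; induction m as [|m IHm]; intros k z Hl; [simpl; lra|].
  destruct (Z_le_gt_dec z (M - Z.of_nat k * q)) as [Hz|Hz].
  - rewrite !surv_S.
    apply Rle_trans with
      (expect (F k z) (fun x => surv_next G q l m k (z + Z.of_nat x - q)%Z)).
    + apply expect_le_of_dominance; auto using surv_next_shift_bounds.
      * intro N. rewrite <- !cdf_INR. apply hFG, Hz.
      * apply (surv_next_mono G q l hG). intro w. apply surv_succ; auto.
    + apply expect_le; auto using surv_next_shift_bounds.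
      intro x. unfold surv_next. destruct Z.ltb; [|lra].
      apply IHm. intros j Hj. apply Hl. lia.
  - rewrite (surv_above_barrier F q l hF M); [apply surv_bounds; auto | auto | lia].
Qed.

Theorem lemma2 (b q : Z) (Fp Gp : nat -> Z -> nat -> R) (M : Z)
  (hq : (0 <= q)%Z)
  (hF : forall (k : nat) (z : Z), is_pmf (Fp k z))
  (hG : forall (k : nat) (z : Z), is_pmf (Gp k z))
  (h1 : forall (k : nat) (z : Z) (t : R),
      cdf (Gp k z) t <= cdf (Gp k (z - 1)%Z) (t + 1))
  (hMb : (b <= M)%Z)
  (h2 : forall (k : nat) (z : Z), (z <= M - Z.of_nat k * q)%Z ->
      forall t : R, cdf (Fp k z) t <= cdf (Gp k z) t)
  (n : nat) (hn : (1 <= n)%nat) (l : nat -> Z)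
  (hl : forall k : nat, (1 <= k <= n)%nat -> (l k <= M - Z.of_nat k * q)%Z) :
  prob_all_above Fp q b l n >= prob_all_above Gp q b l n.
Proof.
  apply Rle_ge, (surv_le_of_dominance q M Fp Gp l hF hG h1 h2 n 0 b hl).
Qed.
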